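(* Let $M\subseteq\mathbb R^d$ be open, $\alpha\in(0,1]$, and let $\Phi:M\to\mathbb R^d$ be a conformal $C^{1+\alpha}$ diffeomorphism onto its image. Let $\varnothing\ne F\subseteq M$ be compact. Then there is $S>0$ such that $\Phi|_F:F\to\mathbb R^d$ is $\alpha$-almost similar with parameter $S$ (with respect to the Euclidean metrics on $F$ and $\mathbb R^d$).
   Context: Conformal $C^{1+\alpha}$ diffeomorphism: $\Phi$ and $\Phi^{-1}$ are $C^1$ with $\alpha$-Hölder continuous derivatives, and for each $x\in M$ the Jacobian matrix $D\Phi(x)$ is a nonzero scalar times a rotation matrix. A bi-Lipschitz map $\Psi:X\to Y$ between metric spaces is $\alpha$-almost similar with parameter $S\ge0$ if there is $A>0$ such that for every non-empty compact $K\subseteq X$ there is $C_K>0$ with $C_K(1+A\operatorname{diam}^\alpha K)^{-1}\le\frac{d_Y(\Psi(x),\Psi(y))}{d_X(x,y)}\le C_K(1+A\operatorname{diam}^\alpha K)$ for all $x\ne y\in K_{S\operatorname{diam}K}$, where $K_r=\{x\in X:\operatorname{dist}(x,K)\le r\}$ (for $X=F$ this is $F\cap\{x:\operatorname{dist}(x,K)\le r\}$). *)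

From mathcomp Require Import all_boot all_fingroup.
From Stdlib Require Import Reals.
Set Implicit Arguments. Unset Strict Implicit. Unset Printing Implicit Defensive.
Open Scope R_scope.

Definition vec (d : nat) := 'I_d -> R.
Definition mat (d : nat) := 'I_d -> 'I_d -> R.

Definition sumR (d : nat) (f : 'I_d -> R) : R := \big[Rplus/R0]_(i < d) f i.

Definition vsub d (x y : vec d) : vec d := fun i => x i - y i.
Definition mapply d (A : mat d) (x : vec d) : vec d := fun i => sumR (fun j => A i j * x j).

Definition vnorm d (x : vec d) : R := sqrt (sumR (fun i => x i ^ 2)).
Definition edist d (x y : vec d) : R := vnorm (vsub x y).
Definition mnorm d (A : mat d) : R := sqrt (sumR (fun i => sumR (fun j => A i j ^ 2))).
Definition msub d (A B : mat d) : mat d := fun i j => A i j - B i j.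

(* real power t^a for t >= 0, a > 0, with 0^a = 0 *)
Definition rpow (t a : R) : R := if Rle_dec t 0 then 0 else Rpower t a.

Definition sgnR d (s : {perm 'I_d}) : R := if odd_perm s then -1 else 1.
Definition detR d (A : mat d) : R :=
  \big[Rplus/R0]_(s : {perm 'I_d}) (sgnR s * \big[Rmult/R1]_(i < d) A i (s i)).

Definition rotation d (Q : mat d) : Prop :=
  (forall i j : 'I_d, sumR (fun k => Q k i * Q k j) = if i == j then 1 else 0)
  /\ detR Q = 1.

Definition conformal_mat d (A : mat d) : Prop :=
  exists (lam : R) (Q : mat d), lam <> 0 /\ rotation Q /\
    forall i j, A i j = lam * Q i j.

Definition is_open d (U : vec d -> Prop) : Prop :=
  forall x, U x -> exists r, 0 < r /\ forall y, edist y x < r -> U y.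

Definition seq_compact d (K : vec d -> Prop) : Prop :=
  forall u : nat -> vec d, (forall n, K (u n)) ->
    exists (phi : nat -> nat) (l : vec d),
      (forall n, is_true (leq (phi n).+1 (phi n.+1))) /\ K l /\
      forall eps, 0 < eps -> exists N, forall n, is_true (leq N n) -> edist (u (phi n)) l < eps.

Definition has_deriv d (U : vec d -> Prop) (f : vec d -> vec d) (x : vec d) (A : mat d) : Prop :=
  forall eps, 0 < eps -> exists delta, 0 < delta /\
    forall y, U y -> edist y x < delta ->
      vnorm (vsub (vsub (f y) (f x)) (mapply A (vsub y x))) <= eps * edist y x.

Definition C1alpha d (U : vec d -> Prop) (alpha : R) (f : vec d -> vec d) (Df : vec d -> mat d) : Prop :=
  (forall x, U x -> has_deriv U f x (Df x)) /\
  (forall x, U x -> forall eps, 0 < eps -> exists delta, 0 < delta /\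
      forall y, U y -> edist y x < delta -> mnorm (msub (Df y) (Df x)) < eps) /\
  exists C, 0 <= C /\ forall x y, U x -> U y ->
      mnorm (msub (Df x) (Df y)) <= C * rpow (edist x y) alpha.

Definition image d (U : vec d -> Prop) (f : vec d -> vec d) : vec d -> Prop :=
  fun y => exists x, U x /\ f x = y.

Definition conformal_C1a_diffeo d (M : vec d -> Prop) (alpha : R) (Phi : vec d -> vec d) : Prop :=
  exists (DPhi : vec d -> mat d) (Psi : vec d -> vec d) (DPsi : vec d -> mat d),
    C1alpha M alpha Phi DPhi /\
    (forall x, M x -> conformal_mat (DPhi x)) /\
    is_open (image M Phi) /\
    (forall x, M x -> Psi (Phi x) = x) /\
    (forall y, image M Phi y -> M (Psi y) /\ Phi (Psi y) = y) /\
    C1alpha (image M Phi) alpha Psi DPsi.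

Definition is_diam d (K : vec d -> Prop) (D : R) : Prop :=
  is_lub (fun r => exists x y, K x /\ K y /\ r = edist x y) D.

(* x belongs to X_r = {x in X : dist(x, K) <= r}, with dist(x,K) = inf_{k in K} |x-k| *)
Definition in_nbhd d (X K : vec d -> Prop) (r : R) (x : vec d) : Prop :=
  X x /\ forall eps, 0 < eps -> exists k, K k /\ edist x k < r + eps.

Definition bilipschitz_on d (X : vec d -> Prop) (f : vec d -> vec d) : Prop :=
  exists L, 0 < L /\ forall x y, X x -> X y ->
    edist x y / L <= edist (f x) (f y) <= L * edist x y.

Definition almost_similar_on d (X : vec d -> Prop) (alpha S : R) (f : vec d -> vec d) : Prop :=
  bilipschitz_on X f /\
  exists A, 0 < A /\
    forall K : vec d -> Prop, (exists k, K k) -> seq_compact K -> (forall k, K k -> X k) ->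
    forall D, is_diam K D ->
    exists CK, 0 < CK /\
      forall x y, in_nbhd X K (S * D) x -> in_nbhd X K (S * D) y -> x <> y ->
        CK / (1 + A * rpow D alpha) <= edist (f x) (f y) / edist x y
        <= CK * (1 + A * rpow D alpha).

From Pilot Require Import Defs.
From HB Require Import structures.
From mathcomp Require Import all_boot all_fingroup.
From Stdlib Require Import Reals Lra FunctionalExtensionality ClassicalEpsilon Classical.
Set Implicit Arguments. Unset Strict Implicit.
Open Scope R_scope.

(* Fix the compact set F inside the open set M, and a nonempty compact K in F
   of diameter D; we take S = 1.  Two facts about the distortion ratio
   r(x, y) = |Phi x - Phi y| / |x - y| for x <> y in the D-neighbourhood of K:
   - Phi is bi-Lipschitz on F (both Phi and its inverse are Lipschitz on
     compacta, by the mean value inequality and compactness), so r lies in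
     [1/L, L] for a constant L independent of K;
   - if 2D is below the distance del from F to the complement of M, the
     segment between x and y stays in M, and comparing Phi with its derivative
     at a point k of K (a scalar mu times a rotation) through the mean value
     inequality and the Hoelder bound on DPhi gives |r - mu| <= 2 C D^alpha.
   An elementary pinching argument (ratio_pinch) turns these into the bounds
   C_K / (1 + A D^alpha) <= r <= C_K (1 + A D^alpha), with A depending only on
   L, C and del: when D is small C_K comes from mu, and when D >= del/2 the term
   A D^alpha dominates L. *)

Lemma Rplus_assoc_law : associative Rplus.
Proof. by move=> *; rewrite Rplus_assoc. Qed.
HB.instance Definition _ :=
  Monoid.isComLaw.Build R R0 Rplus Rplus_assoc_law Rplus_comm Rplus_0_l.

Section FiniteSums.
Variable d : nat.
Implicit Types f g : 'I_d -> R.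

Lemma sumR_ext f g : (forall i, f i = g i) -> sumR f = sumR g.
Proof. by move=> fg; apply: eq_bigr => i _. Qed.

Lemma sumR0 : sumR (fun _ : 'I_d => 0) = 0.
Proof. by rewrite /sumR big1. Qed.

Lemma sumR_add f g : sumR (fun i => f i + g i) = sumR f + sumR g.
Proof. by rewrite /sumR big_split. Qed.

Lemma sumR_scal c f : sumR (fun i => c * f i) = c * sumR f.
Proof. by rewrite /sumR; elim/big_rec2: _ => [|i y1 y2 _ ->]; lra. Qed.

Lemma sumR_sub f g : sumR (fun i => f i - g i) = sumR f - sumR g.
Proof. by rewrite /sumR; elim/big_rec3: _ => [|i y1 y2 y3 _ ->]; lra. Qed.

Lemma sumR_le f g : (forall i, f i <= g i) -> sumR f <= sumR g.
Proof.
move=> fg; rewrite /sumR; elim/big_rec2: _ => [|i y1 y2 _ IH]; first lra.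
by have := fg i; lra.
Qed.

Lemma sumR_ge0 f : (forall i, 0 <= f i) -> 0 <= sumR f.
Proof. by move=> f0; rewrite -sumR0; apply: sumR_le. Qed.

Lemma sumR_eq0 f : (forall i, 0 <= f i) -> sumR f = 0 -> forall i, f i = 0.
Proof.
move=> f0 sum0 i; move: sum0; rewrite /sumR (bigD1 i) //=.
set rest := (X in _ + X = _).
have : 0 <= rest by rewrite /rest; elim/big_rec: _ => [|j y _ IH]; [lra | have := f0 j; lra].
by have := f0 i; lra.
Qed.

Lemma sumR_delta (j : 'I_d) (c : 'I_d -> R) :
  sumR (fun l => c l * (if j == l then 1 else 0)) = c j.
Proof.
rewrite /sumR (bigD1 j) //= eqxx big1; first ring.
by move=> l /negbTE; rewrite eq_sym => ->; ring.
Qed.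

Lemma sumR_exch (f : 'I_d -> 'I_d -> R) :
  sumR (fun i => sumR (fun j => f i j)) = sumR (fun j => sumR (fun i => f i j)).
Proof. exact: exchange_big. Qed.

Lemma sumR_mul f g : sumR f * sumR g = sumR (fun j => sumR (fun l => f j * g l)).
Proof.
rewrite Rmult_comm -sumR_scal; apply: sumR_ext => j.
by rewrite Rmult_comm -sumR_scal; apply: sumR_ext => l; ring.
Qed.

End FiniteSums.

Definition dot d (u v : vec d) : R := sumR (fun i => u i * v i).

Section Euclidean.
Variable d : nat.
Implicit Types u v w : vec d.

Lemma dot_ext u u' v v' :
  (forall i, u i = u' i) -> (forall i, v i = v' i) -> dot u v = dot u' v'.
Proof. by move=> uu vv; apply: sumR_ext => i; rewrite uu vv. Qed.

Lemma dot_ge0 u : 0 <= dot u u.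
Proof. by apply: sumR_ge0 => i; nra. Qed.

Lemma dot_sub w u v : dot w (vsub u v) = dot w u - dot w v.
Proof. by rewrite /dot -sumR_sub; apply: sumR_ext => i; rewrite /vsub; ring. Qed.

Lemma dot_comb s t u v :
  dot (fun i => s * u i + t * v i) (fun i => s * u i + t * v i) =
  s * s * dot u u + 2 * s * t * dot u v + t * t * dot v v.
Proof. by rewrite /dot -!sumR_scal -!sumR_add; apply: sumR_ext => i; ring. Qed.

Lemma vnorm_dot u : vnorm u = sqrt (dot u u).
Proof. by rewrite /vnorm /dot; f_equal; apply: sumR_ext => i; ring. Qed.

Lemma vnorm_ge0 u : 0 <= vnorm u.
Proof. exact: sqrt_pos. Qed.

Lemma vnorm_sq u : vnorm u * vnorm u = dot u u.
Proof. by rewrite vnorm_dot sqrt_sqrt //; apply: dot_ge0. Qed.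

Lemma vnorm_ext u v : (forall i, u i = v i) -> vnorm u = vnorm v.
Proof. by move=> uv; rewrite !vnorm_dot (dot_ext uv uv). Qed.

(* Cauchy-Schwarz, from 0 <= |a u - b v|^2 = a (a c - b^2) with a = |v|^2, b = u.v. *)
Lemma cauchy_schwarz u v : dot u v * dot u v <= dot u u * dot v v.
Proof.
have [v0|vpos] := Req_dec (dot v v) 0.
  have vi0 i : v i = 0.
    by have := sumR_eq0 (f := fun i => v i * v i) (fun i => ltac:(nra)) v0 i; nra.
  have -> : dot u v = 0 by rewrite -(sumR0 d); apply: sumR_ext => i; rewrite vi0; ring.
  by rewrite v0; lra.
have apos : 0 < dot v v by have := dot_ge0 v; lra.
have key : 0 <= dot v v * (dot u u * dot v v - dot u v * dot u v).
  have := dot_ge0 (fun i => dot v v * u i + - dot u v * v i).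
  by rewrite dot_comb; lra.
nra.
Qed.

Lemma dot_abs_le u v : Rabs (dot u v) <= vnorm u * vnorm v.
Proof.
rewrite -[X in _ <= X]Rabs_pos_eq; last by apply: Rmult_le_pos; apply: vnorm_ge0.
apply: Rsqr_le_abs_0; rewrite /Rsqr.
by have := cauchy_schwarz u v; rewrite -!vnorm_sq; lra.
Qed.

Lemma dot_le u v : dot u v <= vnorm u * vnorm v.
Proof. exact: Rle_trans (Rle_abs _) (dot_abs_le u v). Qed.

Lemma vnorm_tri u v : vnorm (fun i => u i + v i) <= vnorm u + vnorm v.
Proof.
have := vnorm_ge0 u; have := vnorm_ge0 v; have := dot_le u v => uv v0 u0.
rewrite (vnorm_ext (v := fun i => 1 * u i + 1 * v i)); last by move=> i; ring.
rewrite vnorm_dot dot_comb -(sqrt_square (vnorm u + vnorm v)); last lra.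
by apply: sqrt_le_1_alt; rewrite -!vnorm_sq; nra.
Qed.

Lemma vnorm_scal c u : vnorm (fun i => c * u i) = Rabs c * vnorm u.
Proof.
rewrite !vnorm_dot -(sqrt_square (Rabs c)); last exact: Rabs_pos.
rewrite -sqrt_mult; [| by have := Rabs_pos c; nra | exact: dot_ge0].
f_equal; rewrite -Rabs_mult Rabs_pos_eq; last nra.
by rewrite /dot -sumR_scal; apply: sumR_ext => i; ring.
Qed.

Lemma vnorm_opp u : vnorm (fun i => - u i) = vnorm u.
Proof.
rewrite (vnorm_ext (u := fun i => - u i) (v := fun i => -1 * u i)); last by move=> i; ring.
by rewrite vnorm_scal Rabs_Ropp Rabs_R1 Rmult_1_l.
Qed.

Lemma vnorm_sub_tri u v w : vnorm (vsub u w) <= vnorm (vsub u v) + vnorm (vsub v w).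
Proof.
rewrite (vnorm_ext (u := vsub u w) (v := fun i => vsub u v i + vsub v w i)); last first.
  by move=> i; rewrite /vsub; ring.
exact: vnorm_tri.
Qed.

Lemma vnorm_le_sub_add u v : vnorm u <= vnorm (vsub u v) + vnorm v.
Proof.
rewrite (vnorm_ext (u := u) (v := fun i => vsub u v i + v i)); last first.
  by move=> i; rewrite /vsub; ring.
exact: vnorm_tri.
Qed.

Lemma vnorm_dist_le u v : Rabs (vnorm u - vnorm v) <= vnorm (vsub u v).
Proof.
have sym : vnorm (vsub v u) = vnorm (vsub u v).
  by rewrite -vnorm_opp; apply: vnorm_ext => i; rewrite /vsub; ring.
by apply: Rabs_le; have := vnorm_le_sub_add u v; have := vnorm_le_sub_add v u; lra.
Qed.

Lemma edist_ge0 u v : 0 <= edist u v.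
Proof. exact: vnorm_ge0. Qed.

Lemma edist_sym u v : edist u v = edist v u.
Proof. by rewrite /edist -vnorm_opp; apply: vnorm_ext => i; rewrite /vsub; ring. Qed.

Lemma edist_tri u v w : edist u w <= edist u v + edist v w.
Proof. exact: vnorm_sub_tri. Qed.

Lemma edist_refl u : edist u u = 0.
Proof.
rewrite /edist (vnorm_ext (u := vsub u u) (v := fun i => 0 * u i)); last first.
  by move=> i; rewrite /vsub; ring.
by rewrite vnorm_scal Rabs_R0 Rmult_0_l.
Qed.

Lemma edist_pos u v : u <> v -> 0 < edist u v.
Proof.
move=> uv; case: (edist_ge0 u v) => // duv; case: uv.
have d0 : dot (vsub u v) (vsub u v) = 0.
  by apply: sqrt_eq_0; [apply: dot_ge0 | rewrite -vnorm_dot].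
apply: functional_extensionality => i.
have := sumR_eq0 (f := fun i => vsub u v i * vsub u v i) (fun i => ltac:(nra)) d0 i.
by rewrite /vsub; nra.
Qed.

End Euclidean.

Section Matrices.
Variable d : nat.
Implicit Types (A B Q : mat d) (u v : vec d).

Lemma mnorm_ge0 A : 0 <= mnorm A.
Proof. exact: sqrt_pos. Qed.

Lemma mapply_scal A u v c : (forall j, u j = c * v j) ->
  forall i, mapply A u i = c * mapply A v i.
Proof. by move=> uv i; rewrite /mapply -sumR_scal; apply: sumR_ext => j; rewrite uv; ring. Qed.

Lemma mapply_msub A B v i : mapply (msub A B) v i = vsub (mapply A v) (mapply B v) i.
Proof. by rewrite /mapply /vsub -sumR_sub; apply: sumR_ext => j; rewrite /msub; ring. Qed.

(* The Frobenius norm bounds the operator norm (Cauchy-Schwarz row by row). *)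
Lemma vnorm_mapply A v : vnorm (mapply A v) <= mnorm A * vnorm v.
Proof.
have A0 := mnorm_ge0 A; have v0 := vnorm_ge0 v.
rewrite vnorm_dot -(sqrt_square (mnorm A * vnorm v)); last exact: Rmult_le_pos.
apply: sqrt_le_1_alt.
have -> : mnorm A * vnorm v * (mnorm A * vnorm v) = (mnorm A * mnorm A) * dot v v.
  by rewrite -vnorm_sq; ring.
rewrite /mnorm sqrt_sqrt; last by apply: sumR_ge0 => i; apply: sumR_ge0 => j; nra.
rewrite Rmult_comm -sumR_scal; apply: sumR_le => i.
have -> : sumR (fun j => A i j ^ 2) = dot (A i) (A i) by apply: sumR_ext => j; ring.
change (mapply A v i) with (dot (A i) v).
by have := cauchy_schwarz (A i) v; lra.
Qed.

Lemma vnorm_rotation Q v : rotation Q -> vnorm (mapply Q v) = vnorm v.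
Proof.
case=> orth _; rewrite !vnorm_dot; f_equal; rewrite /dot.
have -> : sumR (fun i => mapply Q v i * mapply Q v i) =
    sumR (fun i => sumR (fun j => sumR (fun l => Q i j * v j * (Q i l * v l)))).
  by apply: sumR_ext => i; rewrite /mapply sumR_mul.
rewrite sumR_exch; apply: sumR_ext => j.
rewrite sumR_exch -[RHS](sumR_delta j (fun l => v j * v l)).
apply: sumR_ext => l; rewrite -orth -sumR_scal.
by apply: sumR_ext => i; ring.
Qed.

Lemma conformal_scale A : conformal_mat A ->
  exists mu, 0 <= mu /\ forall v, vnorm (mapply A v) = mu * vnorm v.
Proof.
case=> lam [Q [_ [rotQ defA]]]; exists (Rabs lam); split; first exact: Rabs_pos.
move=> v; rewrite -(vnorm_rotation v rotQ) -vnorm_scal; apply: vnorm_ext => i.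
by rewrite /mapply -sumR_scal; apply: sumR_ext => j; rewrite defA; ring.
Qed.

End Matrices.

Definition seg d (x y : vec d) (t : R) : vec d := fun i => x i + t * (y i - x i).

Section Segments.
Variable d : nat.
Implicit Types x y k : vec d.

Lemma seg0 x y : seg x y 0 = x.
Proof. by apply: functional_extensionality => i; rewrite /seg; ring. Qed.

Lemma seg1 x y : seg x y 1 = y.
Proof. by apply: functional_extensionality => i; rewrite /seg; ring. Qed.

Lemma seg_dist x y s t : edist (seg x y s) (seg x y t) = Rabs (s - t) * edist y x.
Proof. by rewrite /edist -vnorm_scal; apply: vnorm_ext => i; rewrite /vsub /seg; ring. Qed.

Lemma seg_in_ball x y k rho t : 0 <= t <= 1 ->
  edist x k <= rho -> edist y k <= rho -> edist (seg x y t) k <= rho.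
Proof.
move=> t01 xk yk; rewrite /edist in xk yk *.
rewrite (vnorm_ext (v := fun i => (1 - t) * vsub x k i + t * vsub y k i)); last first.
  by move=> i; rewrite /vsub /seg; ring.
apply: Rle_trans (vnorm_tri _ _) _; rewrite !vnorm_scal !Rabs_pos_eq; nra.
Qed.

End Segments.

Section MeanValue.
Variables (d : nat) (U : vec d -> Prop) (f : vec d -> vec d) (Df : vec d -> mat d).
Hypothesis U_open : is_open U.
Hypothesis f_deriv : forall z, U z -> has_deriv U f z (Df z).

Lemma deriv_along_segment x y w t : U (seg x y t) ->
  derivable_pt_lim (fun s => dot w (f (seg x y s))) t
    (dot w (mapply (Df (seg x y t)) (vsub y x))).
Proof.
move=> Uz eps eps0; set z := seg x y t; set e := vsub y x.
set scale := vnorm w * vnorm e + 1.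
have w0 := vnorm_ge0 w; have e0 := vnorm_ge0 e.
have scale0 : 0 < scale by rewrite /scale; nra.
have eps'0 : 0 < eps / (2 * scale) by apply: Rdiv_lt_0_compat; lra.
have [dl [dl0 Hdl]] := f_deriv Uz eps'0.
have [r [r0 Hr]] := U_open Uz.
have rho0 : 0 < Rmin dl r / (vnorm e + 1).
  by apply: Rdiv_lt_0_compat; [apply: Rmin_glb_lt | lra].
exists (mkposreal _ rho0) => s s0 /= hs.
have dist_z : edist (seg x y (t + s)) z = Rabs s * vnorm e.
  by rewrite seg_dist; have -> : t + s - t = s by ring.
have close : Rabs s * vnorm e < Rmin dl r.
  have : Rabs s * (vnorm e + 1) < Rmin dl r.
    have := Rmult_lt_compat_r (vnorm e + 1) _ _ ltac:(lra) hs.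
    by rewrite /Rdiv Rmult_assoc Rinv_l ?Rmult_1_r; lra.
  by have := Rabs_pos s; nra.
have Uz' : U (seg x y (t + s)) by apply: Hr; rewrite dist_z; have := Rmin_r dl r; lra.
have := Hdl _ Uz' ltac:(rewrite dist_z; have := Rmin_l dl r; lra).
set z' := seg x y (t + s); rewrite dist_z.
set rem := vsub (vsub (f z') (f z)) (mapply (Df z) (vsub z' z)) => Hrem.
have lin : dot w (mapply (Df z) (vsub z' z)) = s * dot w (mapply (Df z) e).
  have step j : vsub z' z j = s * e j by rewrite /z' /z /e /seg /vsub; ring.
  rewrite /dot -sumR_scal; apply: sumR_ext => i.
  by rewrite (mapply_scal _ step); ring.
have -> : (dot w (f z') - dot w (f z)) / s - dot w (mapply (Df z) e) = dot w rem / s.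
  by rewrite /rem !dot_sub lin; field.
have s_pos : 0 < Rabs s by apply: Rabs_pos_lt.
rewrite /Rdiv Rabs_mult Rabs_inv; apply: (Rmult_lt_reg_r (Rabs s)) => //.
rewrite Rmult_assoc Rinv_l ?Rmult_1_r; last lra.
apply: Rle_lt_trans (dot_abs_le _ _) _.
have small : vnorm w * vnorm e / scale < 1.
  have -> : vnorm w * vnorm e / scale = 1 - / scale by rewrite /scale; field; nra.
  by have := Rinv_0_lt_compat scale scale0; lra.
apply: Rle_lt_trans (Rmult_le_compat_l _ _ _ w0 Hrem) _.
have -> : vnorm w * (eps / (2 * scale) * (Rabs s * vnorm e)) =
    vnorm w * vnorm e / scale * (eps / 2 * Rabs s) by field; lra.
have : 0 < eps / 2 * Rabs s by nra.
nra.
Qed.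

Lemma mvt_linear_approx x y (B : mat d) m :
  (forall t, 0 <= t <= 1 -> U (seg x y t) /\ mnorm (msub (Df (seg x y t)) B) <= m) ->
  vnorm (vsub (vsub (f y) (f x)) (mapply B (vsub y x))) <= m * edist y x.
Proof.
move=> Hseg; set e := vsub y x; set w := vsub (vsub (f y) (f x)) (mapply B e).
have [c [Hc c01]] := MVT_cor2 (fun s => dot w (f (seg x y s)))
  (fun s => dot w (mapply (Df (seg x y s)) e)) 0 1 Rlt_0_1
  (fun t t01 => deriv_along_segment w (proj1 (Hseg t t01))).
have [_ Dc] := Hseg c ltac:(lra).
have ww : dot w w = dot w (mapply (msub (Df (seg x y c)) B) e).
  rewrite (dot_ext (fun i => erefl) (mapply_msub _ _ _)) {2}/w !dot_sub.
  by move: Hc; rewrite /= seg0 seg1 Rminus_0_r Rmult_1_r => ->.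
have w0 := vnorm_ge0 w; have m0 : 0 <= m by have := mnorm_ge0 (msub (Df (seg x y c)) B); lra.
have : vnorm w * vnorm w <= vnorm w * (m * vnorm e).
  rewrite vnorm_sq ww; apply: Rle_trans (dot_le _ _) _; apply: Rmult_le_compat_l => //.
  by apply: Rle_trans (vnorm_mapply _ _) _; apply: Rmult_le_compat_r => //; apply: vnorm_ge0.
rewrite /edist -/e.
have [->|wpos] := Req_dec (vnorm w) 0; first by have := vnorm_ge0 e; nra.
by move=> h; apply: (Rmult_le_reg_l (vnorm w)); lra.
Qed.

End MeanValue.

Lemma nat_unbounded c : exists N, forall n, (N <= n)%nat -> c < INR n.
Proof.
have [N HN] := INR_archimed 1 c Rlt_0_1; exists N => n /leP Nn.
by have := le_INR _ _ Nn; lra.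
Qed.

Lemma inv_succ_small eps : 0 < eps -> exists N, forall n, (N <= n)%nat -> / (INR n + 1) < eps.
Proof.
move=> eps0; have [N HN] := nat_unbounded (/ eps); exists N => n Nn.
have := HN n Nn; have := Rinv_0_lt_compat _ eps0 => inv0 lt.
rewrite -(Rinv_inv eps); apply: Rinv_lt_contravar; nra.
Qed.

Section Compactness.
Variable d : nat.
Implicit Types (K : vec d -> Prop) (f : vec d -> vec d).

Lemma seq_compact_extract K u : seq_compact K -> (forall n, K (u n)) ->
  exists phi l, (forall n, (n <= phi n)%nat) /\ K l /\
    forall eps, 0 < eps -> exists N, forall n, (N <= n)%nat -> edist (u (phi n)) l < eps.
Proof.
move=> HK Ku; have [phi [l [incr [Kl lim]]]] := HK u Ku.
exists phi, l; split=> //; elim=> [|n IH] //.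
exact: leq_trans (incr n).
Qed.

Lemma compact_margin K U : seq_compact K -> is_open U -> (forall x, K x -> U x) ->
  exists del, 0 < del /\ forall k z, K k -> edist z k < del -> U z.
Proof.
move=> HK HU KU; apply: NNPP => no_margin.
have bad n : exists p : vec d * vec d, K p.1 /\ edist p.2 p.1 < / (INR n + 1) /\ ~ U p.2.
  apply: NNPP => no_bad; apply: no_margin; exists (/ (INR n + 1)); split.
    by apply: Rinv_0_lt_compat; have := pos_INR n; lra.
  move=> k z Kk zk; apply: NNPP => Uz; apply: no_bad; by exists (k, z).
have [u Hu] := @choice _ _ _ bad.
have [phi [l [phi_ge [Kl lim]]]] := seq_compact_extract HK (fun n => proj1 (Hu n)).
have [r [r0 Hr]] := HU l (KU l Kl).
have [N1 HN1] := lim (r / 2) ltac:(lra).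
have [N2 HN2] := inv_succ_small (eps := r / 2) ltac:(lra).
have [_ [near notU]] := Hu (phi (maxn N1 N2)).
apply: notU; apply: Hr.
have := HN1 _ (leq_maxl N1 N2).
have := HN2 _ (leq_trans (leq_maxr N1 N2) (phi_ge _)).
by have := edist_tri (u (phi (maxn N1 N2))).2 (u (phi (maxn N1 N2))).1 l; lra.
Qed.

Lemma compact_bounded K p : seq_compact K ->
  exists R, forall x, K x -> edist x p <= R.
Proof.
move=> HK; apply: NNPP => unbounded.
have far n : exists x, K x /\ INR n < edist x p.
  apply: NNPP => no_far; apply: unbounded; exists (INR n) => x Kx.
  by apply: Rnot_lt_le => lt; apply: no_far; exists x.
have [u Hu] := @choice _ _ _ far.
have [phi [l [phi_ge [Kl lim]]]] := seq_compact_extract HK (fun n => proj1 (Hu n)).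
have [N1 HN1] := lim 1 Rlt_0_1.
have [N2 HN2] := nat_unbounded (1 + edist l p).
have := HN1 _ (leq_maxl N1 N2).
have := HN2 _ (leq_trans (leq_maxr N1 N2) (phi_ge _)).
have := proj2 (Hu (phi (maxn N1 N2))).
by have := edist_tri (u (phi (maxn N1 N2))) l p; lra.
Qed.

Definition continuous_on K f : Prop :=
  forall x, K x -> forall eps, 0 < eps -> exists del, 0 < del /\
    forall y, K y -> edist y x < del -> edist (f y) (f x) < eps.

Lemma continuous_on_sub K K' f : (forall x, K x -> K' x) ->
  continuous_on K' f -> continuous_on K f.
Proof.
move=> KK' cf x Kx eps eps0; have [del [del0 Hdel]] := cf x (KK' x Kx) eps eps0.
by exists del; split=> // y Ky; apply: Hdel; apply: KK'.
Qed.

Lemma image_compact K f : seq_compact K -> continuous_on K f -> seq_compact (Defs.image K f).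
Proof.
move=> HK cf u Ku; have [v Hv] := @choice _ _ _ Ku.
have [phi [l [incr [Kl lim]]]] := HK v (fun n => proj1 (Hv n)).
exists phi, (f l); split=> //; split; first by exists l.
move=> eps eps0; have [del [del0 Hdel]] := cf l Kl eps eps0.
have [N HN] := lim del del0; exists N => n Nn.
by rewrite -(proj2 (Hv (phi n))); apply: Hdel => //; [apply: (proj1 (Hv _)) | apply: HN].
Qed.

End Compactness.

Lemma deriv_continuous d (U : vec d -> Prop) f (Df : vec d -> mat d) :
  (forall z, U z -> has_deriv U f z (Df z)) -> continuous_on U f.
Proof.
move=> f_deriv x Ux eps eps0.
have [d1 [d1pos Hd1]] := f_deriv x Ux 1 Rlt_0_1.
set a := mnorm (Df x); have a0 : 0 <= a by apply: mnorm_ge0.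
exists (Rmin d1 (eps / (1 + a))); split.
  by apply: Rmin_glb_lt => //; apply: Rdiv_lt_0_compat; lra.
move=> y Uy yx.
have small : (1 + a) * edist y x < eps.
  have yx' : edist y x < eps / (1 + a) by have := Rmin_r d1 (eps / (1 + a)); lra.
  have := Rmult_lt_compat_l (1 + a) _ _ ltac:(lra) yx'.
  by have -> : (1 + a) * (eps / (1 + a)) = eps by field; lra.
have rem := Hd1 y Uy ltac:(have := Rmin_l d1 (eps / (1 + a)); lra).
have lin := vnorm_mapply (Df x) (vsub y x).
have := vnorm_le_sub_add (vsub (f y) (f x)) (mapply (Df x) (vsub y x)).
rewrite -/a /edist in lin; rewrite /edist in rem small *.
by have := vnorm_ge0 (vsub y x); nra.
Qed.

Lemma rpow_ge0 t a : 0 <= rpow t a.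
Proof. by rewrite /rpow; destruct (Rle_dec t 0) => /=; [lra | exact: Rlt_le (exp_pos _)]. Qed.

Lemma rpow_pos t a : 0 < t -> 0 < rpow t a.
Proof. by move=> t0; rewrite /rpow; destruct (Rle_dec t 0) => /=; [lra | exact: exp_pos]. Qed.

Lemma rpow_mono s t a : 0 < a -> s <= t -> rpow s a <= rpow t a.
Proof.
move=> a0 st; have := rpow_ge0 t a; rewrite /rpow.
destruct (Rle_dec s 0) => //=; destruct (Rle_dec t 0) => /= [|_]; first lra.
by apply: Rle_Rpower_l; lra.
Qed.

Lemma rpow_double t a : 0 < a <= 1 -> 0 <= t -> rpow (2 * t) a <= 2 * rpow t a.
Proof.
move=> a01 t0; rewrite /rpow.
destruct (Rle_dec (2 * t) 0); destruct (Rle_dec t 0) => /=; try lra.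
rewrite -Rpower_mult_distr; [|lra|lra].
have : Rpower 2 a <= Rpower 2 1 by apply: Rle_Rpower; lra.
by rewrite Rpower_1; [have := exp_pos (a * ln t); rewrite /Rpower; nra | lra].
Qed.

(* Lipschitz bound for short increments: if the ball of radius del around x
   lies in U and x is within R0 of a base point x0, the mean value inequality
   against Df x0 and the Hoelder bound give a constant depending only on
   R0 + del and Df x0. *)
Lemma increment_near d (U : vec d -> Prop) f (Df : vec d -> mat d) a C x0 R0 del x y :
  is_open U -> 0 < a -> 0 <= C -> (forall z, U z -> has_deriv U f z (Df z)) ->
  (forall x y, U x -> U y -> mnorm (msub (Df x) (Df y)) <= C * rpow (edist x y) a) ->
  U x0 -> edist x x0 <= R0 -> (forall z, edist z x < del -> U z) -> edist y x < del ->
  edist (f x) (f y) <= (C * rpow (R0 + del) a + mnorm (Df x0)) * edist x y.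
Proof.
move=> HU a0 C0 f_deriv holder Ux0 xx0 ball yx.
have seg_ok t : 0 <= t <= 1 ->
    U (seg x y t) /\ mnorm (msub (Df (seg x y t)) (Df x0)) <= C * rpow (R0 + del) a.
  move=> t01; have zx : edist (seg x y t) x <= edist y x.
    by apply: seg_in_ball; rewrite ?edist_refl; [lra | apply: edist_ge0 | lra].
  have Uz : U (seg x y t) by apply: ball; lra.
  split=> //; apply: Rle_trans (holder _ _ Uz Ux0) _.
  apply: Rmult_le_compat_l => //; apply: rpow_mono => //.
  by have := edist_tri (seg x y t) x x0; lra.
have approx := mvt_linear_approx HU f_deriv seg_ok.
have lin := vnorm_mapply (Df x0) (vsub y x).
have := vnorm_le_sub_add (vsub (f y) (f x)) (mapply (Df x0) (vsub y x)).
rewrite (edist_sym (f x)) (edist_sym x) /edist in approx *.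
by have := vnorm_ge0 (vsub y x); nra.
Qed.

(* A C^1 map whose derivative is Hoelder continuous on the open set U is
   Lipschitz on every compact subset G of U: near pairs are handled by
   increment_near, far pairs by boundedness of f(G). *)
Lemma lipschitz_on_compact d (U G : vec d -> Prop) f (Df : vec d -> mat d) a C :
  is_open U -> 0 < a -> 0 <= C -> (forall z, U z -> has_deriv U f z (Df z)) ->
  (forall x y, U x -> U y -> mnorm (msub (Df x) (Df y)) <= C * rpow (edist x y) a) ->
  seq_compact G -> (forall x, G x -> U x) ->
  exists L, 0 < L /\ forall x y, G x -> G y -> edist (f x) (f y) <= L * edist x y.
Proof.
move=> HU a0 C0 f_deriv holder HG GU.
have [[x0 Gx0]|empty] := classic (exists x0, G x0); last first.
  by exists 1; split=> [|x y Gx]; [lra | case: empty; exists x].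
have [del [del0 margin]] := compact_margin HG HU GU.
have [R0 HR0] := compact_bounded x0 HG.
have cf : continuous_on G f by apply: continuous_on_sub GU (deriv_continuous f_deriv).
have [R1 HR1] := compact_bounded (f x0) (image_compact HG cf).
set m := C * rpow (R0 + del) a + mnorm (Df x0).
have m0 : 0 <= m by rewrite /m; have := mnorm_ge0 (Df x0); have := rpow_ge0 (R0 + del) a; nra.
have R10 : 0 <= R1 by have := HR1 (f x0) (ex_intro _ x0 (conj Gx0 erefl)); rewrite edist_refl.
have R1del : 0 <= 2 * R1 / del.
  by apply: Rmult_le_pos; [lra | apply: Rlt_le; apply: Rinv_0_lt_compat].
exists (m + 2 * R1 / del + 1); split; first lra.
move=> x y Gx Gy; have xy0 := edist_ge0 x y.
have [yx|yx] := Rlt_le_dec (edist y x) del.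
  have := increment_near HU a0 C0 f_deriv holder (GU _ Gx0) (HR0 x Gx) (margin x^~ Gx) yx.
  by rewrite -/m; nra.
have far : 2 * R1 <= 2 * R1 / del * edist x y.
  rewrite edist_sym.
  have -> : 2 * R1 / del * edist y x = 2 * R1 * (edist y x / del) by field; lra.
  have : 1 <= edist y x / del.
    by apply: (Rmult_le_reg_r del) => //; rewrite /Rdiv Rmult_assoc Rinv_l; lra.
  by nra.
have := HR1 (f x) (ex_intro _ x (conj Gx erefl)); have := HR1 (f y) (ex_intro _ y (conj Gy erefl)).
by have := edist_tri (f x) (f x0) (f y); rewrite (edist_sym (f x0)); nra.
Qed.

Lemma diffeo_bilipschitz d (M F : vec d -> Prop) a (Phi Psi : vec d -> vec d)
    (DPhi DPsi : vec d -> mat d) :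
  is_open M -> 0 < a -> C1alpha M a Phi DPhi -> is_open (Defs.image M Phi) ->
  (forall x, M x -> Psi (Phi x) = x) -> C1alpha (Defs.image M Phi) a Psi DPsi ->
  seq_compact F -> (forall x, F x -> M x) ->
  exists L, 1 <= L /\ forall x y, F x -> F y ->
    edist x y / L <= edist (Phi x) (Phi y) <= L * edist x y.
Proof.
move=> HM a0 [dPhi [_ [C [C0 holderPhi]]]] HimM inv [dPsi [_ [C' [C'0 holderPsi]]]] HF FM.
have [L1 [L10 lipPhi]] := lipschitz_on_compact HM a0 C0 dPhi holderPhi HF FM.
have contPhi : continuous_on F Phi by apply: continuous_on_sub FM (deriv_continuous dPhi).
have imF_imM u : Defs.image F Phi u -> Defs.image M Phi u.
  by case=> x [Fx <-]; exists x; split=> //; apply: FM.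
have [L2 [L20 lipPsi]] :=
  lipschitz_on_compact HimM a0 C'0 dPsi holderPsi (image_compact HF contPhi) imF_imM.
exists (L1 + L2 + 1); split; first lra.
move=> x y Fx Fy; have xy0 := edist_ge0 x y; have Pxy0 := edist_ge0 (Phi x) (Phi y).
split; last by have := lipPhi x y Fx Fy; nra.
have := lipPsi (Phi x) (Phi y) (ex_intro _ x (conj Fx erefl)) (ex_intro _ y (conj Fy erefl)).
rewrite !inv; try exact: FM.
move=> back; apply: (Rmult_le_reg_r (L1 + L2 + 1)); first lra.
by rewrite /Rdiv Rmult_assoc Rinv_l; nra.
Qed.

Lemma ratio_near_conformal d (U : vec d -> Prop) f (Df : vec d -> mat d) a C k rho :
  is_open U -> 0 < a -> 0 <= C -> 0 <= rho -> (forall z, U z -> has_deriv U f z (Df z)) ->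
  (forall x y, U x -> U y -> mnorm (msub (Df x) (Df y)) <= C * rpow (edist x y) a) ->
  conformal_mat (Df k) -> (forall z, edist z k <= rho -> U z) ->
  exists mu, forall x y, edist x k <= rho -> edist y k <= rho -> x <> y ->
    Rabs (edist (f x) (f y) / edist x y - mu) <= C * rpow rho a.
Proof.
move=> HU a0 C0 rho0 f_deriv holder conf ball.
have [mu [_ scale]] := conformal_scale conf; exists mu => x y xk yk xy.
have Uk : U k by apply: ball; rewrite edist_refl.
have seg_ok t : 0 <= t <= 1 ->
    U (seg x y t) /\ mnorm (msub (Df (seg x y t)) (Df k)) <= C * rpow rho a.
  move=> t01; have zk := seg_in_ball t01 xk yk; have Uz := ball _ zk.
  split=> //; apply: Rle_trans (holder _ _ Uz Uk) _.
  by apply: Rmult_le_compat_l => //; apply: rpow_mono.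
have approx := mvt_linear_approx HU f_deriv seg_ok.
have xy0 := edist_pos xy.
rewrite (edist_sym (f x)) (edist_sym x) in xy0 *.
have := vnorm_dist_le (vsub (f y) (f x)) (mapply (Df k) (vsub y x)).
rewrite scale /edist in xy0 approx * => tri.
have -> : vnorm (vsub (f y) (f x)) / vnorm (vsub y x) - mu =
    (vnorm (vsub (f y) (f x)) - mu * vnorm (vsub y x)) / vnorm (vsub y x) by field; lra.
rewrite /Rdiv Rabs_mult Rabs_inv (Rabs_pos_eq (vnorm _)); last lra.
apply: (Rmult_le_reg_r (vnorm (vsub y x))) => //.
by rewrite Rmult_assoc Rinv_l ?Rmult_1_r; lra.
Qed.

Definition pinch_const (L c P : R) : R := 2 * L * c + L / P + 1.

Lemma ratio_pinch (ratio : R -> Prop) L c P X :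
  1 <= L -> 0 <= c -> 0 < P -> 0 <= X ->
  (forall r, ratio r -> 1 / L <= r <= L) ->
  (exists mu, forall r, ratio r -> Rabs (r - mu) <= c * X) \/ P <= X ->
  exists CK, 0 < CK /\ forall r, ratio r ->
    CK / (1 + pinch_const L c P * X) <= r <= CK * (1 + pinch_const L c P * X).
Proof.
move=> L1 c0 P0 X0 bounds; set A := pinch_const L c P.
have invL : 0 < 1 / L by apply: Rdiv_lt_0_compat; lra.
have LP : 0 < L / P by apply: Rdiv_lt_0_compat; lra.
have A2Lc : 2 * L * c <= A by rewrite /A /pinch_const; lra.
have ALP : L / P <= A by rewrite /A /pinch_const; nra.
have AX0 : 0 <= A * X by nra.
have cancel a : a * (1 + A * X) / (1 + A * X) = a by field; lra.
case=> [[mu close] | large].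
- set a := Rmax (1 / L) (mu - c * X).
  have aL : 1 / L <= a by apply: Rmax_l.
  have cX : 2 * c * X <= a * (A * X).
    have -> : 2 * c * X = 1 / L * (2 * L * c * X) by field; lra.
    apply: Rmult_le_compat; [lra | | lra | exact: Rmult_le_compat_r X0 A2Lc].
    by apply: Rmult_le_pos => //; nra.
  exists (a * (1 + A * X)); split; first nra.
  move=> r rr; rewrite cancel; have [lo hi] := bounds r rr.
  have := close r rr; have := Rle_abs (r - mu); have := Rle_abs (- (r - mu)).
  rewrite Rabs_Ropp => ub lb dist; split.
    by apply: Rmax_lub; lra.
  by have := Rmax_r (1 / L) (mu - c * X); rewrite -/a; nra.
- exists (1 / L * (1 + A * X)); split; first nra.
  move=> r rr; rewrite cancel; have [lo hi] := bounds r rr; split=> //.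
  have LAX : L <= A * X.
    have -> : L = L / P * P by field; lra.
    by apply: Rmult_le_compat; lra.
  have -> : 1 / L * (1 + A * X) * (1 + A * X) = (1 + A * X) * (1 + A * X) / L by field; lra.
  apply: (Rmult_le_reg_r L); first lra.
  by rewrite /Rdiv Rmult_assoc Rinv_l; nra.
Qed.

Lemma pinch_const_pos L c P : 1 <= L -> 0 <= c -> 0 < P -> 0 < pinch_const L c P.
Proof.
move=> L1 c0 P0; rewrite /pinch_const.
have : 0 < L / P by apply: Rdiv_lt_0_compat; lra.
by nra.
Qed.

Lemma ratio_of_bilipschitz L t s : 0 < L -> 0 < t -> t / L <= s <= L * t ->
  1 / L <= s / t <= L.
Proof.
move=> L0 t0 [lo hi]; have st : s / t * t = s by field; lra.
split; apply: (Rmult_le_reg_r t) => //; rewrite st //.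
by have -> : 1 / L * t = t / L by field; lra.
Qed.

Lemma nbhd_dist d (X K : vec d -> Prop) r D k x :
  in_nbhd X K r x -> K k -> (forall k', K k' -> edist k' k <= D) -> edist x k <= r + D.
Proof.
move=> [_ near] Kk diamK; apply: le_epsilon => eps eps0.
have [k' [Kk' xk']] := near eps eps0.
by have := edist_tri x k' k; have := diamK k' Kk'; lra.
Qed.

Definition distortion_ratios d (X K : vec d -> Prop) (r : R) (f : vec d -> vec d) (q : R) : Prop :=
  exists x y, in_nbhd X K r x /\ in_nbhd X K r y /\ x <> y /\
    q = edist (f x) (f y) / edist x y.

Lemma distortion_bilipschitz d (X K : vec d -> Prop) r f L :
  0 < L -> (forall x y, X x -> X y -> edist x y / L <= edist (f x) (f y) <= L * edist x y) ->
  forall q, distortion_ratios X K r f q -> 1 / L <= q <= L.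
Proof.
move=> L0 bilip q [x [y [[Xx _] [[Xy _] [xy ->]]]]].
by apply: ratio_of_bilipschitz => //; [exact: edist_pos | exact: bilip].
Qed.

Lemma distortion_dichotomy d (U X K : vec d -> Prop) f (Df : vec d -> mat d) a C del D k :
  is_open U -> 0 < a <= 1 -> 0 <= C -> (forall z, U z -> has_deriv U f z (Df z)) ->
  (forall x y, U x -> U y -> mnorm (msub (Df x) (Df y)) <= C * rpow (edist x y) a) ->
  conformal_mat (Df k) -> (forall z, edist z k < del -> U z) ->
  K k -> (forall k', K k' -> edist k' k <= D) -> 0 <= D ->
  (exists mu, forall q, distortion_ratios X K D f q -> Rabs (q - mu) <= 2 * C * rpow D a) \/
  rpow (del / 2) a <= rpow D a.
Proof.
move=> HU a01 C0 f_deriv holder conf margin Kk diamK D0.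
have [small|large] := Rlt_le_dec (2 * D) del; [left | right]; last first.
  by apply: rpow_mono; lra.
have a0 : 0 < a by lra.
have rho0 : 0 <= 2 * D by lra.
have [mu close] := ratio_near_conformal HU a0 C0 rho0 f_deriv holder conf
  (fun z zk => margin z ltac:(lra)).
exists mu => q [x [y [xK [yK [xy ->]]]]].
have := nbhd_dist xK Kk diamK; have := nbhd_dist yK Kk diamK => yk xk.
apply: Rle_trans (close x y ltac:(lra) ltac:(lra) xy) _.
by have := rpow_double a01 D0; nra.
Qed.

Theorem mainTheorem14 (d : nat) (M : vec d -> Prop) (alpha : R)
  (Phi : vec d -> vec d) (F : vec d -> Prop) :
  is_open M -> 0 < alpha <= 1 -> conformal_C1a_diffeo M alpha Phi ->
  (exists x, F x) -> seq_compact F -> (forall x, F x -> M x) ->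
  exists S, 0 < S /\ almost_similar_on F alpha S Phi.
Proof.
move=> HM alpha01 [DPhi [Psi [DPsi [PhiC1 [conf [HimM [inv [_ PsiC1]]]]]]]] _ HF FM.
have alpha0 : 0 < alpha by lra.
have [L [L1 bilip]] := diffeo_bilipschitz HM alpha0 PhiC1 HimM inv PsiC1 HF FM.
have [del [del0 margin]] := compact_margin HF HM FM.
case: PhiC1 => [dPhi [_ [C [C0 holder]]]].
have P0 : 0 < rpow (del / 2) alpha by apply: rpow_pos; lra.
exists 1; split; first lra; split; first by exists L; split; [lra | exact: bilip].
exists (pinch_const L (2 * C) (rpow (del / 2) alpha)).
split; first by apply: pinch_const_pos; lra.
move=> K [k Kk] _ KF D diamD.
have diamK k' : K k' -> edist k' k <= D by move=> Kk'; apply: (proj1 diamD); exists k', k.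
have D0 : 0 <= D by have := diamK k Kk; rewrite edist_refl.
have L0 : 0 < L by lra.
have C2 : 0 <= 2 * C by lra.
have [CK [CK0 pinch]] := ratio_pinch L1 C2 P0 (rpow_ge0 D alpha)
  (distortion_bilipschitz (K := K) (r := D) L0 bilip)
  (distortion_dichotomy F HM alpha01 C0 dPhi holder (conf k (FM k (KF k Kk)))
     (fun z => margin k z (KF k Kk)) Kk diamK D0).
rewrite Rmult_1_l.
exists CK; split=> // x y xK yK xy.
by apply: pinch; exists x, y.
Qed.
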